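(* Let $G$ be a simple graph. (1) If $\mathcal{B}$ is a strongly disjoint set of bouquets of $G$ of type $(i,j)$, then $\mathcal{E}(\mathcal{B})$ is a self disjoint set in $G$ of type $(i,i+j)$. Conversely, if $\mathcal{S}$ is a self disjoint set in $G$ of type $(i,i+j)$, then $\mathcal{S}=\mathcal{E}(\mathcal{B})$ for some strongly disjoint set of bouquets $\mathcal{B}$ of $G$ of type $(i,j)$. (2) Every self semi-disjoint set in $G$ is a self disjoint set. (3) $d_{1,G}=d_{2,G}=d_G$ and $d'_{1,G}=d'_{2,G}=d'_G$.
   Context: A simple graph $G$ is a simple hypergraph all of whose edges have two elements. A bouquet of $G$ is a subgraph with vertex set $\{x,y_1,\dots,y_t\}$, $t\ge1$, and edges $\{x,y_\ell\}$ ($\ell=1,\dots,t$) of $G$; $x$ is the root, the $y_\ell$ are the flowers and the edges $\{x,y_\ell\}$ the stems. A set $\mathcal{B}=\{B_1,\dots,B_j\}$ of bouquets of $G$ is strongly disjoint if the $B_k$ are pairwise vertex-disjoint and one can choose a stem from each $B_k$ so that these stems form an induced matching of $G$; it has type $(i,j)$ if the total number of flowers is $i$ (and $j$ is the number of bouquets). $\mathcal{E}(\mathcal{B})$ denotes the set of all edges of the bouquets in $\mathcal{B}$. $d_G$ (resp. $d'_G$) is the maximum $i$ (resp. maximum $j$) over strongly disjoint sets of bouquets of $G$ of type $(i,j)$. For a family $\mathcal{S}=\{S_1,\dots,S_i\}$ of distinct edges, its type is $(i,j)$ with $j=|\bigcup_\ell S_\ell|$. $\mathcal{S}$ is a semi-induced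 matching if no edge outside $\mathcal{S}$ is contained in $\bigcup_\ell S_\ell$, an induced matching if moreover its edges are pairwise disjoint. $\mathcal{S}$ is a self disjoint set (resp. self semi-disjoint set) if (i) for all $k$, $S_k\nsubseteq\bigcup_{\ell\neq k}S_\ell$, and (ii) there is an induced matching (resp. semi-induced matching) $\mathcal{S}_0\subseteq\mathcal{S}$ such that for each $S_\ell\in\mathcal{S}\setminus\mathcal{S}_0$ there is $S'\in\mathcal{S}_0$ with $|S_\ell\setminus S'|=1$. $d_{1,G}$ (resp. $d_{2,G}$) is the maximum size of a self disjoint (resp. self semi-disjoint) set, and $d'_{1,G}$ (resp. $d'_{2,G}$) is the maximum of $j-i$ over self disjoint (resp. self semi-disjoint) sets of type $(i,j)$. *)

From mathcomp Require Import all_boot.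
Set Implicit Arguments. Unset Strict Implicit. Unset Printing Implicit Defensive.

Section Graph.
Variables (T : finType) (e : rel T).

Definition is_edge (s : {set T}) : bool :=
  (#|s| == 2) && [forall x in s, forall y in s, (x != y) ==> e x y].

Definition edge_family (S : {set {set T}}) : bool := [forall s in S, is_edge s].

Definition semi_induced_matching (S : {set {set T}}) : bool :=
  edge_family S && [forall s, (is_edge s && (s \subset cover S)) ==> (s \in S)].

Definition induced_matching (S : {set {set T}}) : bool :=
  semi_induced_matching S &&
  [forall s in S, forall s' in S, (s != s') ==> [disjoint s & s']].

Definition self_cond (S : {set {set T}}) : bool :=
  [forall s in S, ~~ (s \subset cover (S :\ s))].

Definition self_disjoint (S : {set {set T}}) : bool :=
  edge_family S && self_cond S &&
  [exists S0 : {set {set T}}, (S0 \subset S) && induced_matching S0 &&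
     [forall s in S :\: S0, exists s' in S0, #|s :\: s'| == 1]].

Definition self_semi_disjoint (S : {set {set T}}) : bool :=
  edge_family S && self_cond S &&
  [exists S0 : {set {set T}}, (S0 \subset S) && semi_induced_matching S0 &&
     [forall s in S :\: S0, exists s' in S0, #|s :\: s'| == 1]].

(* a bouquet is represented by (root, set of flowers) *)
Definition bouquet (b : T * {set T}) : bool :=
  (b.2 != set0) && [forall y in b.2, e b.1 y].

Definition bvert (b : T * {set T}) : {set T} := b.1 |: b.2.

Definition strongly_disjoint (B : {set T * {set T}}) : bool :=
  [forall b in B, bouquet b] &&
  [forall b in B, forall b' in B, (b != b') ==> [disjoint bvert b & bvert b']] &&
  [exists f : {ffun T * {set T} -> T},
     [forall b in B, f b \in b.2] && induced_matching [set [set b.1; f b] | b in B]].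

Definition nflowers (B : {set T * {set T}}) : nat := \sum_(b in B) #|b.2|.

Definition bedges (B : {set T * {set T}}) : {set {set T}} :=
  [set [set p.1; p.2] | p in [set p : T * T | [exists b in B, (p.1 == b.1) && (p.2 \in b.2)]]].

Definition dG : nat := \max_(B : {set T * {set T}} | strongly_disjoint B) nflowers B.
Definition d'G : nat := \max_(B : {set T * {set T}} | strongly_disjoint B) #|B|.
Definition d1G : nat := \max_(S : {set {set T}} | self_disjoint S) #|S|.
Definition d2G : nat := \max_(S : {set {set T}} | self_semi_disjoint S) #|S|.
(* j - i for type (i,j); truncation is harmless since the empty family gives 0 *)
Definition d'1G : nat := \max_(S : {set {set T}} | self_disjoint S) (#|cover S| - #|S|).
Definition d'2G : nat := \max_(S : {set {set T}} | self_semi_disjoint S) (#|cover S| - #|S|).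

End Graph.

From mathcomp Require Import all_boot.
Set Implicit Arguments. Unset Strict Implicit. Unset Printing Implicit Defensive.

(* Every member of a self-disjoint family S has a private vertex, lying in no
   other member, so two members of S can only meet in their other vertex and
   sharing a vertex is transitive on S (meet_trans): S is a disjoint union of
   stars.  The induced matching S0 of condition (ii) meets each star in exactly
   one edge; rooting each star at the non-private end of that edge gives
   strongly disjoint bouquets whose stems are S.  Conversely, the flowers of
   strongly disjoint bouquets are private vertices of their stems, and the
   chosen stems form the required induced matching.  For a self semi-disjoint
   family, a smallest subfamily of the semi-induced matching that still
   dominates S is pairwise disjoint by transitivity, and it stays semi-induced
   because private vertices keep all other members of S out of its cover.  The
   equalities of the invariants follow since both correspondences preserve
   types. *)

Lemma card_bigcup_disjoint (I U : finType) (B : {set I}) (F : I -> {set U}) :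
  {in B &, forall i j, i != j -> [disjoint F i & F j]} ->
  #|\bigcup_(i in B) F i| = \sum_(i in B) #|F i|.
Proof.
move=> disjF; pose G i := if i \in B then F i else set0.
have -> : \bigcup_(i in B) F i = \bigcup_i G i by rewrite big_mkcond.
rewrite -sum1_card partition_disjoint_bigcup => [|i j ij].
  rewrite [RHS]big_mkcond; apply: eq_bigr => i _; rewrite /G sum1_card.
  by case: ifP; rewrite ?cards0.
rewrite /G -setI_eq0; case: ifP => iB; case: ifP => jB; rewrite ?set0I ?setI0 //.
by rewrite setI_eq0 disjF.
Qed.

Lemma eq_bigmax_attained (I J : finType) (P : pred I) (Q : pred J)
    (F : I -> nat) (G : J -> nat) :
  (forall i, P i -> exists2 j, Q j & F i = G j) ->
  (forall j, Q j -> exists2 i, P i & G j = F i) ->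
  \max_(i | P i) F i = \max_(j | Q j) G j.
Proof.
move=> FG GF; apply/eqP; rewrite eqn_leq; apply/andP; split; apply/bigmax_leqP.
  by move=> i /FG[j Qj ->]; exact: leq_bigmax_cond.
by move=> j /GF[i Pi ->]; exact: leq_bigmax_cond.
Qed.

Section TwoSets.
Variable T : finType.
Implicit Types (s t : {set T}) (x y : T).

Lemma meetP s t : reflect (exists2 x, x \in s & x \in t) (~~ [disjoint s & t]).
Proof.
rewrite -setI_eq0; apply: (iffP (set0Pn _)) => [[x /setIP[]]|[x xs xt]]; exists x => //.
exact/setIP.
Qed.

Lemma card2_eq_set2 t x y : #|t| = 2 -> x \in t -> y \in t -> x != y -> t = [set x; y].
Proof.
move=> t2 xt yt xy; apply/esym/eqP; rewrite eqEcard cards2 xy t2 andbT.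
by apply/subsetP => z /set2P[]->.
Qed.

Lemma card2_other t x : #|t| = 2 -> x \in t -> exists2 y, y != x & t = [set x; y].
Proof.
move=> t2 xt; have /eqP/cards1P[y tx] : #|t :\ x| = 1.
  by move: (cardsD1 x t); rewrite xt t2 add1n => -[].
have : y \in t :\ x by rewrite tx set11.
by rewrite !inE => /andP[yx yt]; exists y; rewrite // (card2_eq_set2 t2 xt yt) // eq_sym.
Qed.

Lemma card2_meet s t : #|s| = 2 -> #|t| = 2 -> s != t ->
  (#|s :\: t| == 1) = ~~ [disjoint s & t].
Proof.
move=> s2 t2 st; have st1 : #|s :&: t| <= 1.
  rewrite leqNgt; apply: contra st => st2.
  have sIt : s :&: t = s by apply/eqP; rewrite eqEcard subsetIl s2.
  by rewrite eqEcard s2 t2 -sIt subsetIr.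
rewrite cardsD s2 -setI_eq0 -cards_eq0.
by move: st1; case: #|s :&: t| => [|[|]].
Qed.

End TwoSets.

Definition edge_dominating (T : finType) (S X : {set {set T}}) : bool :=
  [forall s in S :\: X, exists s' in X, #|s :\: s'| == 1].

Lemma edge_dominatingP (T : finType) (S X : {set {set T}}) :
  {in S, forall s : {set T}, #|s| = 2} -> X \subset S ->
  reflect (forall s, s \in S -> exists2 t, t \in X & ~~ [disjoint s & t])
          (edge_dominating S X).
Proof.
move=> S2 XS; apply: (iffP forall_inP) => [dom s sS | dom s /setDP[sS sX]].
  have [sX|sX] := boolP (s \in X).
    by exists s; rewrite // -setI_eq0 setIid -cards_eq0 S2.
  have /exists_inP[t tX st] : [exists t in X, #|s :\: t| == 1].
    by apply: dom; rewrite inE sX.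
  have s_t : s != t by apply: contraNneq sX => ->.
  by exists t; rewrite // -card2_meet // S2 // (subsetP XS).
have [t tX st] := dom s sS; apply/exists_inP; exists t => //.
have s_t : s != t by apply: contraNneq sX => ->.
by rewrite card2_meet // S2 // (subsetP XS).
Qed.

Section SelfCond.
Variables (T : finType) (S : {set {set T}}).
Hypotheses (S2 : {in S, forall s : {set T}, #|s| = 2}) (Scond : self_cond S).
Implicit Types (s t u : {set T}) (x y : T).

Lemma mem_cover_setD1 s t x : t \in S -> t != s -> x \in t -> x \in cover (S :\ s).
Proof. by move=> tS ts xt; apply/bigcupP; exists t; rewrite // !inE ts. Qed.

Lemma private_vertex s : s \in S -> exists2 p, p \in s & p \notin cover (S :\ s).
Proof. by move=> sS; apply/subsetPn; move/forall_inP: Scond; apply. Qed.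

Lemma shared_vertex_uniq s x y : s \in S -> x \in s -> y \in s ->
  x \in cover (S :\ s) -> y \in cover (S :\ s) -> x = y.
Proof.
move=> sS xs ys xc yc; apply/eqP; apply: contraT => xy.
have [p + pn] := private_vertex sS; rewrite (card2_eq_set2 (S2 sS) xs ys xy).
by case/set2P => pE; rewrite pE ?xc ?yc in pn.
Qed.

Lemma meet_trans s t u : s \in S -> t \in S -> u \in S ->
  ~~ [disjoint s & t] -> ~~ [disjoint t & u] -> ~~ [disjoint s & u].
Proof.
move=> sS tS uS; have [<- _ //|st] := eqVneq s t; have [-> //|tu] := eqVneq t u.
move=> /meetP[x xs xt] /meetP[y yt yu]; apply/meetP; exists x => //.
have ut : u != t by rewrite eq_sym.
by rewrite (shared_vertex_uniq tS xt yt (mem_cover_setD1 sS st xs) (mem_cover_setD1 uS ut yu)).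
Qed.

Definition root_of t x := exists2 p, t = [set x; p] & p \notin cover (S :\ t).

Lemma exists_root_of t : t \in S -> exists x, root_of t x.
Proof.
move=> tS; have [p pt pn] := private_vertex tS; have [x _ tE] := card2_other (S2 tS) pt.
by exists x, p; rewrite // tE setUC.
Qed.

Lemma exists_root_set (S0 : {set {set T}}) : S0 \subset S ->
    {in S0 &, forall t t', ~~ [disjoint t & t'] -> t = t'} ->
  exists R : {set T}, [/\ forall x, x \in R -> exists2 t, t \in S0 & root_of t x,
                          forall t, t \in S0 -> exists2 x, x \in R & root_of t x
                        & forall t x y, t \in S0 -> x \in R -> y \in R ->
                            x \in t -> y \in t -> x = y].
Proof.
move=> S0S S0disj.
(* One singleton set per edge rather than one vertex: no default vertex of T is needed. *)
have : forall t, exists X : {set T}, t \in S0 -> exists2 x, X = [set x] & root_of t x.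
  move=> t; have [tS0|] := boolP (t \in S0); last by exists set0.
  by have [x rx] := exists_root_of (subsetP S0S _ tS0); exists [set x] => _; exists x.
case/fin_all_exists => rho rhoP; exists (\bigcup_(t in S0) rho t).
have inR t x : t \in S0 -> x \in rho t -> root_of t x.
  by move=> tS0; have [x' -> rx'] := rhoP t tS0; move/set1P ->.
have rhoR t x : t \in S0 -> x \in \bigcup_(t in S0) rho t -> x \in t -> x \in rho t.
  move=> tS0 /bigcupP[t' t'S0 xt'] xt; have [p t'E _] := inR _ _ t'S0 xt'.
  suff <- : t' = t by [].
  by apply: S0disj => //; apply/meetP; exists x; rewrite // t'E set21.
split.
- by move=> x /bigcupP[t tS0 xt]; exists t; last exact: inR.
- move=> t tS0; have [x rhoE rx] := rhoP t tS0; exists x => //.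
  by apply/bigcupP; exists t; rewrite // rhoE set11.
- move=> t x y tS0 xR yR xt yt; have [x' rhoE _] := rhoP t tS0.
  by move: (rhoR t x tS0 xR xt) (rhoR t y tS0 yR yt); rewrite rhoE => /set1P-> /set1P->.
Qed.

End SelfCond.

Section Graph.
Variables (T : finType) (e : rel T).
Hypotheses (esym : symmetric e) (eirr : irreflexive e).
Implicit Types (S X : {set {set T}}) (B : {set T * {set T}}) (b : T * {set T}).
Implicit Types (s t : {set T}) (x y : T).

Lemma is_edge2 x y : is_edge e [set x; y] = (x != y) && e x y.
Proof.
rewrite /is_edge cards2; have [->|xy] //= := eqVneq x y.
apply/forall_inP/idP => [edge | exy z zxy].
  by move/forall_inP/(_ y (set22 x y))/implyP/(_ xy): (edge x (set21 x y)).
apply/forall_inP => w wxy.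
by case/set2P: zxy => ->; case/set2P: wxy => ->; rewrite ?eqxx //= ?(esym y x) exy implybT.
Qed.

Lemma edge_family_card2 S : edge_family e S -> {in S, forall s : {set T}, #|s| = 2}.
Proof. by move=> /forall_inP Se s /Se /andP[/eqP]. Qed.

Lemma semi_induced_matchingS S S0 X : self_cond S -> S0 \subset S -> X \subset S0 ->
  semi_induced_matching e S0 -> semi_induced_matching e X.
Proof.
move=> Scond S0S XS0 /andP[/forall_inP S0e /forall_inP S0ind].
apply/andP; split; first by apply/forall_inP => s /(subsetP XS0) /S0e.
apply/forall_inP => s /andP[se sX].
have sS : s \in S.
  apply/(subsetP S0S)/S0ind; rewrite se; apply: subset_trans sX _.
  by apply/subsetP => z /bigcupP[t tX zt]; apply/bigcupP; exists t; rewrite ?(subsetP XS0).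
have [p ps pn] := private_vertex Scond sS.
have /bigcupP[t tX pt] := subsetP sX p ps.
have [<- //|ts] := eqVneq t s.
by rewrite (mem_cover_setD1 (subsetP S0S _ (subsetP XS0 _ tX)) ts pt) in pn.
Qed.

Section MinimalDominating.
Variables (S X : {set {set T}}).
Hypotheses (S2 : {in S, forall s : {set T}, #|s| = 2}) (Scond : self_cond S).
Hypothesis XS : X \subset S.

Lemma edge_dominating_setD1 t1 t2 : t1 \in X -> t2 \in X -> t1 != t2 ->
  ~~ [disjoint t1 & t2] -> edge_dominating S X -> edge_dominating S (X :\ t2).
Proof.
move=> t1X t2X t12 meet12 /(edge_dominatingP S2 XS) dom.
apply/(edge_dominatingP S2 (subset_trans (subD1set X t2) XS)) => s sS.
have [t tX st] := dom s sS; have [tE|tt2] := eqVneq t t2.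
  exists t1; first by rewrite !inE t12.
  rewrite tE in st; rewrite disjoint_sym in meet12.
  have [t1S t2S] := (subsetP XS _ t1X, subsetP XS _ t2X).
  exact: (meet_trans S2 Scond sS t2S t1S st meet12).
by exists t; rewrite // !inE tt2.
Qed.

Lemma minimal_edge_dominating_disjoint :
  edge_dominating S X ->
  (forall Y : {set {set T}}, Y \subset X -> edge_dominating S Y -> #|X| <= #|Y|) ->
  {in X &, forall t1 t2, t1 != t2 -> [disjoint t1 & t2]}.
Proof.
move=> dom Xmin t1 t2 t1X t2X t12; apply: contraT => meet12.
have := Xmin _ (subD1set X t2) (edge_dominating_setD1 t1X t2X t12 meet12 dom).
by rewrite (cardsD1 t2 X) t2X add1n ltnn.
Qed.

End MinimalDominating.

Lemma self_disjoint_self_semi_disjoint S : self_disjoint e S -> self_semi_disjoint e S.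
Proof.
case/andP => /andP[Se Scond] /existsP[S0 /andP[/andP[S0S /andP[S0semi _]] S0dom]].
by rewrite /self_semi_disjoint Se Scond; apply/existsP; exists S0; rewrite S0S S0semi.
Qed.

Lemma self_semi_disjoint_self_disjoint S : self_semi_disjoint e S -> self_disjoint e S.
Proof.
case/andP => /andP[Se Scond] /existsP[S0 /andP[/andP[S0S S0semi] S0dom]].
pose P := [pred X : {set {set T}} | (X \subset S0) && edge_dominating S X].
have PS0 : P S0 by rewrite /= subxx.
have [X /andP[XS0 Xdom] Xmin] := arg_minnP (fun X : {set {set T}} => #|X|) PS0.
have XS := subset_trans XS0 S0S.
rewrite /self_disjoint Se Scond; apply/existsP; exists X.
apply/andP; split; last exact: Xdom.
rewrite XS /induced_matching (semi_induced_matchingS Scond S0S XS0 S0semi) /=.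
have disjX := minimal_edge_dominating_disjoint (edge_family_card2 Se) Scond XS Xdom.
apply/forall_inP => t1 t1X; apply/forall_inP => t2 t2X; apply/implyP; apply: disjX => //.
by move=> Y YX Ydom; apply: Xmin; rewrite inE (subset_trans YX XS0).
Qed.

Lemma strongly_disjointP B : reflect
  [/\ {in B, forall b, bouquet e b},
      {in B &, forall b b', b != b' -> [disjoint bvert b & bvert b']}
    & exists2 f : T * {set T} -> T, {in B, forall b, f b \in b.2}
                                  & induced_matching e [set [set b.1; f b] | b in B]]
  (strongly_disjoint e B).
Proof.
rewrite /strongly_disjoint -andbA.
apply: (iffP and3P) => [[/forall_inP bq /forall_inP disj /existsP[f]] | [bq disj [f fB Mind]]].
  case/andP => /forall_inP fB Mind; split => //; last by exists f.
  by move=> b b' bB b'B; apply/implyP; move/forall_inP: (disj b bB); apply.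
split; first exact/forall_inP.
  apply/forall_inP => b bB; apply/forall_inP => b' b'B; apply/implyP; exact: disj.
apply/existsP; exists [ffun b => f b]; apply/andP; split.
  by apply/forall_inP => b bB; rewrite ffunE fB.
by rewrite (@eq_imset _ _ _ (fun b => [set b.1; f b])) // => b; rewrite ffunE.
Qed.

Lemma induced_matching_meet S : induced_matching e S ->
  {in S &, forall t t', ~~ [disjoint t & t'] -> t = t'}.
Proof.
case/andP => _ /forall_inP disj t t' tS t'S; apply: contraTeq => tt'; rewrite negbK.
by move/forall_inP: (disj t tS) => /(_ t' t'S)/implyP; apply.
Qed.

Definition stems (b : T * {set T}) : {set {set T}} := [set [set b.1; y] | y in b.2].

Lemma bedgesP B s : reflect (exists2 b, b \in B & s \in stems b) (s \in bedges B).
Proof.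
apply: (iffP imsetP) => [[p] | [b bB /imsetP[y yb ->]]].
  rewrite inE => /existsP[b /and3P[bB /eqP p1 p2]] ->.
  by exists b; rewrite // p1; apply: imset_f.
by exists (b.1, y); rewrite // inE; apply/existsP; exists b; rewrite bB eqxx yb.
Qed.

Lemma bedges_stems B : bedges B = \bigcup_(b in B) stems b.
Proof. by apply/setP => s; apply/bedgesP/bigcupP. Qed.

Lemma stem_in_bedges B b y : b \in B -> y \in b.2 -> [set b.1; y] \in bedges B.
Proof. by move=> bB yb; apply/bedgesP; exists b => //; apply: imset_f. Qed.

Lemma stem_sub_bvert (b : T * {set T}) y : y \in b.2 -> [set b.1; y] \subset bvert b.
Proof. by move=> yb; apply/subsetP => z /set2P[]->; rewrite !inE ?eqxx ?yb ?orbT. Qed.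

Lemma bouquet_stem b y : bouquet e b -> y \in b.2 -> is_edge e [set b.1; y].
Proof.
case/andP => _ /forall_inP flowers yb; rewrite is_edge2 flowers // andbT.
by apply: contraTneq (flowers y yb) => <-; rewrite eirr.
Qed.

Lemma root_notin_flowers b : bouquet e b -> b.1 \notin b.2.
Proof. by move=> bq; apply/negP => /(bouquet_stem bq); rewrite setUid /is_edge cards1. Qed.

Section BouquetFamily.
Variable B : {set T * {set T}}.
Hypothesis Bbq : {in B, forall b, bouquet e b}.
Hypothesis Bdisj : {in B &, forall b b', b != b' -> [disjoint bvert b & bvert b']}.

Lemma bvert_inj b b' z : b \in B -> b' \in B -> z \in bvert b -> z \in bvert b' -> b = b'.
Proof.
move=> bB b'B zb zb'; have [//|bb'] := eqVneq b b'.
by rewrite (disjointFr (Bdisj bB b'B bb') zb) in zb'.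
Qed.

Lemma flower_private b y t : b \in B -> y \in b.2 -> t \in bedges B -> y \in t ->
  t = [set b.1; y].
Proof.
move=> bB yb /bedgesP[b' b'B /imsetP[y' y'b' ->]] yt.
have yv : y \in bvert b by rewrite setU1r.
have y'v : y \in bvert b' by apply: subsetP (stem_sub_bvert y'b') _ yt.
rewrite -(bvert_inj bB b'B yv y'v) in yt y'b' *.
case/set2P: yt => [yr|-> //].
by have := root_notin_flowers (Bbq bB); rewrite -yr yb.
Qed.

Lemma edge_family_bedges : edge_family e (bedges B).
Proof.
by apply/forall_inP => _ /bedgesP[b bB /imsetP[y yb ->]]; apply: bouquet_stem (Bbq bB) yb.
Qed.

Lemma self_cond_bedges : self_cond (bedges B).
Proof.
apply/forall_inP => s sE; have /bedgesP[b bB /imsetP[y yb sdef]] := sE.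
apply/subsetPn; exists y; first by rewrite sdef set22.
apply/bigcupP => -[t /setD1P[ts tE] yt].
by move: ts; rewrite (flower_private bB yb tE yt) sdef eqxx.
Qed.

Lemma card_bedges : #|bedges B| = nflowers B.
Proof.
rewrite bedges_stems card_bigcup_disjoint => [|b b' bB b'B bb'].
  apply: eq_bigr => b bB; apply: card_in_imset => y y' yb y'b eq_stem.
  have : y \in [set b.1; y'] by rewrite -eq_stem set22.
  case/set2P => // yr; have := root_notin_flowers (Bbq bB).
  by rewrite -yr yb.
apply: contraTT bb' => /meetP[_ /imsetP[y yb ->] /imsetP[y' y'b' eq_stem]].
rewrite negbK; apply/eqP; apply: (bvert_inj bB b'B (setU11 b.1 b.2)).
by apply: subsetP (stem_sub_bvert y'b') _ _; rewrite -eq_stem set21.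
Qed.

Lemma cover_bedges : cover (bedges B) = \bigcup_(b in B) bvert b.
Proof.
apply/setP => z; apply/bigcupP/bigcupP => [[_ /bedgesP[b bB /imsetP[y yb ->]] zs] | [b bB]].
  by exists b => //; apply: subsetP (stem_sub_bvert yb) _ zs.
have /andP[/set0Pn[y yb] _] := Bbq bB.
case/setU1P => [->|zb].
  by exists [set b.1; y]; [apply: stem_in_bedges | apply: set21].
by exists [set b.1; z]; [apply: stem_in_bedges | apply: set22].
Qed.

Lemma card_cover_bedges : #|cover (bedges B)| = nflowers B + #|B|.
Proof.
rewrite cover_bedges card_bigcup_disjoint // /nflowers -sum1_card -big_split /=.
by apply: eq_bigr => b bB; rewrite cardsU1 (root_notin_flowers (Bbq bB)) addnC.
Qed.

Lemma self_disjoint_bedges (f : T * {set T} -> T) : {in B, forall b, f b \in b.2} ->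
  induced_matching e [set [set b.1; f b] | b in B] -> self_disjoint e (bedges B).
Proof.
move=> fB Mind; rewrite /self_disjoint edge_family_bedges self_cond_bedges /=.
apply/existsP; exists [set [set b.1; f b] | b in B].
have ME : [set [set b.1; f b] | b in B] \subset bedges B.
  by apply/subsetP => _ /imsetP[b bB ->]; apply: stem_in_bedges; rewrite ?fB.
rewrite ME Mind /=.
apply/(edge_dominatingP (edge_family_card2 edge_family_bedges) ME).
move=> _ /bedgesP[b bB /imsetP[y yb ->]]; exists [set b.1; f b]; first exact: imset_f.
by apply/meetP; exists b.1; apply: set21.
Qed.

End BouquetFamily.

Lemma strongly_disjoint_bedges B : strongly_disjoint e B ->
  [/\ self_disjoint e (bedges B), #|bedges B| = nflowers B
    & #|cover (bedges B)| = nflowers B + #|B|].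
Proof.
case/strongly_disjointP => Bbq Bdisj [f fB Mind].
by split; [apply: self_disjoint_bedges fB Mind | apply: card_bedges | apply: card_cover_bedges].
Qed.

Definition star S x : T * {set T} := (x, [set y | [set x; y] \in S]).

Section StarsOfSelfDisjoint.
Variables (S S0 : {set {set T}}) (R : {set T}).
Hypotheses (Se : edge_family e S) (Scond : self_cond S).
Hypotheses (S0S : S0 \subset S) (S0ind : induced_matching e S0).
Hypothesis S0dom : forall s, s \in S -> exists2 t, t \in S0 & ~~ [disjoint s & t].
Hypothesis R_root : forall x, x \in R -> exists2 t, t \in S0 & root_of S t x.
Hypothesis root_R : forall t, t \in S0 -> exists2 x, x \in R & root_of S t x.
Hypothesis R_uniq : forall t x y, t \in S0 -> x \in R -> y \in R -> x \in t -> y \in t -> x = y.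

Let S2 := edge_family_card2 Se.
Let S0disj := induced_matching_meet S0ind.

Lemma star_bouquet x : x \in R -> bouquet e (star S x).
Proof.
move=> xR; have [t tS0 [p tE _]] := R_root xR; apply/andP; split.
  by apply/set0Pn; exists p; rewrite inE -tE (subsetP S0S).
apply/forall_inP => y; rewrite inE => /(forall_inP Se).
by rewrite is_edge2 => /andP[].
Qed.

Lemma mem_bvert_star x t z : x \in t -> t \in S -> z \in bvert (star S x) ->
  exists2 s, s \in S & (x \in s) && (z \in s).
Proof.
move=> xt tS /setU1P[->|]; first by exists t; rewrite ?xt.
by rewrite inE => xzS; exists [set x; z]; rewrite ?set21 ?set22.
Qed.

Lemma disjoint_bvert_star x x' : x \in R -> x' \in R -> x != x' ->
  [disjoint bvert (star S x) & bvert (star S x')].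
Proof.
move=> xR x'R; apply: contraTT => /meetP[z zx zx']; rewrite negbK; apply/eqP.
have [t tS0 [p tE _]] := R_root xR; have [t' t'S0 [p' t'E _]] := R_root x'R.
have [xt x't'] : x \in t /\ x' \in t' by rewrite tE t'E !set21.
have [tS t'S] := (subsetP S0S _ tS0, subsetP S0S _ t'S0).
have [s sS /andP[xs zs]] := mem_bvert_star xt tS zx.
have [s' s'S /andP[x's' zs']] := mem_bvert_star x't' t'S zx'.
have meet_ts : ~~ [disjoint t & s] by apply/meetP; exists x.
have meet_ss' : ~~ [disjoint s & s'] by apply/meetP; exists z.
have meet_s't' : ~~ [disjoint s' & t'] by apply/meetP; exists x'.
have meet_tt' := meet_trans S2 Scond tS s'S t'S
  (meet_trans S2 Scond tS sS s'S meet_ts meet_ss') meet_s't'.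
rewrite -(S0disj tS0 t'S0 meet_tt') in x't'.
exact: R_uniq tS0 xR x'R xt x't'.
Qed.

Lemma bedges_stars : bedges (star S @: R) = S.
Proof.
apply/setP => s; apply/bedgesP/idP => [[_ /imsetP[x xR ->] /imsetP[y]] | sS].
  by rewrite inE => xyS ->.
have [t tS0 meet_st] := S0dom sS; have [x xR [p tE pn]] := root_R tS0.
exists (star S x); first exact: imset_f.
have xs : x \in s.
  have [->|st] := eqVneq s t; first by rewrite tE set21.
  case/meetP: meet_st => z zs; rewrite tE => /set2P[<- //|zp].
  by rewrite -zp (mem_cover_setD1 sS st zs) in pn.
have [y _ sE] := card2_other (S2 sS) xs.
by apply/imsetP; exists y; rewrite // inE -sE.
Qed.

Lemma stem_choice : exists2 f : T * {set T} -> T,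
  {in star S @: R, forall b, f b \in b.2} & [set [set b.1; f b] | b in star S @: R] = S0.
Proof.
have : forall b, exists y, b \in star S @: R -> (y \in b.2) && ([set b.1; y] \in S0).
  move=> b; have [/imsetP[x xR ->]|] := boolP (b \in star S @: R); last by exists b.1.
  have [t tS0 [p tE _]] := R_root xR.
  by exists p => _; rewrite inE -tE tS0 (subsetP S0S).
case/fin_all_exists => f fP; exists f => [b /fP /andP[] //|].
apply/setP => t; apply/imsetP/idP => [[b /fP /andP[_ ?] ->] //|tS0].
have [x xR [p tE _]] := root_R tS0; have bB := imset_f (star S) xR.
exists (star S x) => //; have /andP[_ fS0] := fP _ bB.
by apply: S0disj => //; apply/meetP; exists x; rewrite ?tE set21.
Qed.

Lemma strongly_disjoint_stars : strongly_disjoint e (star S @: R).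
Proof.
apply/strongly_disjointP; split.
- by move=> _ /imsetP[x xR ->]; apply: star_bouquet.
- move=> _ _ /imsetP[x xR ->] /imsetP[x' x'R ->] neq.
  by apply: disjoint_bvert_star => //; apply: contraNneq neq => ->.
- by have [f fB fS0] := stem_choice; exists f; rewrite ?fS0.
Qed.

End StarsOfSelfDisjoint.

Lemma self_disjoint_bouquets S : self_disjoint e S ->
  exists2 B, strongly_disjoint e B & bedges B = S.
Proof.
case/andP => /andP[Se Scond] /existsP[S0 /andP[/andP[S0S S0ind] S0dom]].
have S2 := edge_family_card2 Se.
have [R [R_root root_R R_uniq]] :=
  exists_root_set S2 Scond S0S (induced_matching_meet S0ind).
have dom := elimT (edge_dominatingP S2 S0S) S0dom.
exists (star S @: R).
  exact: (strongly_disjoint_stars Se Scond S0S S0ind R_root root_R R_uniq).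
exact: (bedges_stars Se dom root_R).
Qed.

End Graph.

Theorem proposition1p4 (T : finType) (e : rel T)
  (esym : symmetric e) (eirr : irreflexive e) :
  ((forall B : {set T * {set T}}, strongly_disjoint e B ->
      [/\ self_disjoint e (bedges B), #|bedges B| = nflowers B
        & #|cover (bedges B)| = nflowers B + #|B|]) /\
   (forall (S : {set {set T}}) (j : nat), self_disjoint e S ->
      #|cover S| = #|S| + j ->
      exists B : {set T * {set T}},
        [/\ strongly_disjoint e B, bedges B = S, nflowers B = #|S| & #|B| = j]))
  /\ (forall S : {set {set T}}, self_semi_disjoint e S -> self_disjoint e S)
  /\ (d1G e = d2G e /\ d2G e = dG e)
  /\ (d'1G e = d'2G e /\ d'2G e = d'G e).
Proof.
have bedgesE := strongly_disjoint_bedges esym eirr.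
have bouquetsE S : self_disjoint e S -> exists2 B, strongly_disjoint e B &
    [/\ bedges B = S, nflowers B = #|S| & #|cover S| = #|S| + #|B|].
  case/(self_disjoint_bouquets esym) => B sdB <-.
  by have [_ cardE coverE] := bedgesE B sdB; exists B; rewrite ?cardE ?coverE.
have semiE S : self_semi_disjoint e S = self_disjoint e S.
  apply/idP/idP; first exact: self_semi_disjoint_self_disjoint.
  exact: self_disjoint_self_semi_disjoint.
split; [split | split; [exact: self_semi_disjoint_self_disjoint | split; split]].
- exact: bedgesE.
- move=> S j /bouquetsE[B sdB [BE nB coverE]]; rewrite coverE => /addnI.
  by exists B.
- by apply: eq_bigl => S; rewrite semiE.
- apply: eq_bigmax_attained => [S | B]; rewrite ?semiE.
    by case/bouquetsE => B sdB [_ nB _]; exists B.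
  by move=> sdB; have [sdE cardE _] := bedgesE B sdB; exists (bedges B); rewrite ?semiE.
- by apply: eq_bigl => S; rewrite semiE.
- apply: eq_bigmax_attained => [S | B]; rewrite ?semiE.
    by case/bouquetsE => B sdB [_ _ ->]; exists B; rewrite ?addKn.
  move=> sdB; have [sdE cardE coverE] := bedgesE B sdB.
  by exists (bedges B); rewrite ?semiE // coverE cardE addKn.
Qed.
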